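(* Let $\mathscr Q_n$ be a non-singular quadric in $\mathrm{PG}(n,2)$ of projective index $g\ge1$, let $0\le s<g$, let $\alpha_s$ be an $s$-dimensional subspace contained in $\mathscr Q_n$, and let $\Gamma_s$ be the graph constructed from $\alpha_s$ as described below. If $\mathcal C$ is a clique of $\Gamma_s$ with exactly $2^{g+1}-1$ vertices, then $\mathcal C$ is a $g$-clique of Class A or of Class B.
   Context: A non-singular quadric $\mathscr Q_n$ in $\mathrm{PG}(n,2)$ is the point set of a non-degenerate quadric; its projective index $g$ is the largest dimension of a projective subspace contained in $\mathscr Q_n$, and the $g$-dimensional subspaces contained in $\mathscr Q_n$ are its generators. The point-graph $\Gamma$ has vertex set the points of $\mathscr Q_n$, two distinct points adjacent iff the line joining them is contained in $\mathscr Q_n$. A point $X$ of $\mathscr Q_n$ has type (i) if $X\in\alpha_s$; type (ii) if $X\notin\alpha_s$ and $\langle\alpha_s,X\rangle\subseteq\mathscr Q_n$; type (iii) otherwise. Let $\mathcal X_s$ be the type (ii) points and $\mathcal Y_s$ the points of type (i) or (iii). The graph $\Gamma_s$ has the same vertex set as $\Gamma$ and the same edges, except that for each vertex $R\in\mathcal Y_s$ having exactly $\frac12|\mathcal X_s|$ neighbours in $\mathcal X_s$ (in $\Gamma$), those edges are deleted and $R$ is joined instead to the other $\frac12|\mathcal X_s|$ vertices of $\mathcal X_s$. A $g$-clique of Class A is the point set of a generator of $\mathscr Q_n$ containing $\alpha_s$. A $g$-clique of Class B is a set $(\alpha_s\cap\Pi)\cup(\Sigma\setminus(\alpha_s\cup\Pi))\cup(\Pi\setminus\Sigma)$,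 where $\Sigma,\Pi$ are generators of $\mathscr Q_n$ with $\alpha_s\subseteq\Sigma$, $\alpha_s\not\subseteq\Pi$, and $\Sigma\cap\Pi$ of dimension $g-1$. *)

From HB Require Import structures.
From mathcomp Require Import all_boot all_order all_algebra.
Set Implicit Arguments. Unset Strict Implicit. Unset Printing Implicit Defensive.
Import GRing.Theory.
Local Open Scope ring_scope.

(* PG(n,2): the points are the nonzero vectors of F_2^(n+1)
   (over F_2 each 1-dim subspace has exactly one nonzero vector).
   Projective subspaces of dimension d are vector subspaces of dimension d+1. *)
Definition vec (n : nat) := 'rV['F_2]_(n.+1).

Definition qf (n : nat) (A : 'M['F_2]_(n.+1)) (x : vec n) : 'F_2 :=
  (x *m A *m x^T) 0 0.

Definition polar (n : nat) (A : 'M['F_2]_(n.+1)) (x y : vec n) : 'F_2 :=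
  qf A (x + y) - qf A x - qf A y.

Definition nonsingular (n : nat) (A : 'M['F_2]_(n.+1)) : Prop :=
  forall x : vec n, x != 0 -> qf A x = 0 -> exists y : vec n, polar A x y != 0.

Definition qpoints (n : nat) (A : 'M['F_2]_(n.+1)) : {set vec n} :=
  [set x : vec n | (x != 0) && (qf A x == 0)].

Definition ppoints (n : nat) (U : {vspace vec n}) : {set vec n} :=
  [set x : vec n | (x != 0) && (x \in U)].

Definition in_quadric (n : nat) (A : 'M['F_2]_(n.+1)) (U : {vspace vec n}) : bool :=
  [forall x : vec n, (x \in U) ==> (qf A x == 0)].

Definition proj_index (n : nat) (A : 'M['F_2]_(n.+1)) (g : nat) : Prop :=
  (exists U : {vspace vec n}, in_quadric A U /\ \dim U = g.+1) /\
  (forall U : {vspace vec n}, in_quadric A U -> \dim U <= g.+1)%N.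

Definition generator (n : nat) (A : 'M['F_2]_(n.+1)) (g : nat) (U : {vspace vec n}) : Prop :=
  in_quadric A U /\ \dim U = g.+1.

Definition adjG (n : nat) (A : 'M['F_2]_(n.+1)) (P R : vec n) : bool :=
  [&& P \in qpoints A, R \in qpoints A, P != R & in_quadric A (<[P]> + <[R]>)%VS].

Definition typeII (n : nat) (A : 'M['F_2]_(n.+1)) (al : {vspace vec n}) : {set vec n} :=
  [set X in qpoints A | (X \notin al) &&
     in_quadric A (al + <[X]>)%VS].

Definition typeY (n : nat) (A : 'M['F_2]_(n.+1)) (al : {vspace vec n}) : {set vec n} :=
  qpoints A :\: typeII A al.

Definition special (n : nat) (A : 'M['F_2]_(n.+1)) (al : {vspace vec n}) (R : vec n) : bool :=
  (R \in typeY A al) &&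
  (#|[set X in typeII A al | adjG A R X]| * 2 == #|typeII A al|)%N.

Definition adjGs (n : nat) (A : 'M['F_2]_(n.+1)) (al : {vspace vec n}) (P R : vec n) : bool :=
  if special A al R && (P \in typeII A al) then
    [&& P \in qpoints A, R \in qpoints A, P != R & ~~ adjG A P R]
  else if special A al P && (R \in typeII A al) then
    [&& P \in qpoints A, R \in qpoints A, P != R & ~~ adjG A P R]
  else adjG A P R.

Definition clique_s (n : nat) (A : 'M['F_2]_(n.+1)) (al : {vspace vec n}) (C : {set vec n}) : Prop :=
  C \subset qpoints A /\
  (forall P R : vec n, P \in C -> R \in C -> P != R -> adjGs A al P R).

Definition classA (n : nat) (A : 'M['F_2]_(n.+1)) (g : nat) (al : {vspace vec n})
  (C : {set vec n}) : Prop :=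
  exists S : {vspace vec n}, [/\ generator A g S, (al <= S)%VS & C = ppoints S].

Definition classB (n : nat) (A : 'M['F_2]_(n.+1)) (g : nat) (al : {vspace vec n})
  (C : {set vec n}) : Prop :=
  exists S Pi : {vspace vec n},
    [/\ generator A g S /\ generator A g Pi, (al <= S)%VS, ~~ (al <= Pi)%VS,
        \dim (S :&: Pi)%VS = g &
        C = ppoints (al :&: Pi)%VS
            :|: (ppoints S :\: (ppoints al :|: ppoints Pi))
            :|: (ppoints Pi :\: ppoints S)].

(* Let f be the polar form and X_s the set of type (ii) points.  A point not
   orthogonal to alpha_s has exactly |X_s|/2 neighbours in X_s (translation by a
   suitable vector of alpha_s swaps the two halves), while a point of alpha_s sees
   all of X_s; hence two points of a clique C of Gamma_s are f-orthogonal unless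
   one lies in X_s and the other is not orthogonal to alpha_s.
   If C is orthogonal to alpha_s, then alpha_s + <C> is a generator with point
   set C.  Otherwise pick R0 in C not orthogonal to alpha_s and X0 in C /\ X_s
   (if C missed X_s, <C> would be a generator whose points orthogonal to alpha_s
   lie in alpha_s, which is too small).  Split C into C1 = C /\ alpha_s,
   C2 = C /\ X_s and the rest C3: Sigma = alpha_s + <C2> and Pi = <C1 u C3> are
   totally singular, and counting C1 <= alpha_s /\ R0^perp,
   C2 <= Sigma \ (R0^perp u alpha_s) and C3 <= Pi \ X0^perp against
   |C| = 2^(g+1) - 1 shows that Sigma and Pi are generators and that the three
   inclusions are equalities.  Finally every r in C3 cuts Sigma in the hyperplane
   Sigma /\ R0^perp, which is thus orthogonal to Pi, hence contained in Pi: so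
   Sigma /\ Pi has dimension g. *)

From HB Require Import structures.
From Pilot Require Import Defs.
From mathcomp Require Import all_boot all_order all_algebra finfield sesquilinear.
From mathcomp Require Import ring zify.
Set Implicit Arguments. Unset Strict Implicit. Unset Printing Implicit Defensive.
Import GRing.Theory.
Local Open Scope ring_scope.

Section HermitianOrthogonality.
Variables (F : fieldType) (eps : bool) (theta : {rmorphism F -> F}).
Variables (vT : vectType F) (form : {hermitian vT for eps & theta}).
Local Notation orthov := (orthov form).
Implicit Types (U V W : {vspace vT}).

Lemma orthovDE V W : orthov (V + W) = (orthov V :&: orthov W)%VS.
Proof. by apply/vspaceP => x; rewrite memv_cap !mem_orthov_sym subv_add. Qed.

Lemma dim_cap_orthov U V : (\dim U <= \dim (U :&: orthov V) + \dim V)%N.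
Proof.
suff le_span (X : seq vT) W : (\dim W <= \dim (W :&: orthov <<X>>) + size X)%N.
  by have := le_span (vbasis V) U; rewrite (span_basis (vbasisP V)) size_tuple.
elim: X W => [|x X IH] W; first by rewrite span_nil orthov0 capvf addn0.
rewrite span_cons orthovDE (capvC (orthov _)) capvA /=.
have := IH W; have := leq_dim_orthov1 form x (W :&: orthov <<X>>); lia.
Qed.

Lemma orthovS U V : (U <= V)%VS -> (orthov V <= orthov U)%VS.
Proof.
move=> /subvP UV; apply/subvP => x /mem_orthovP xV.
by apply/mem_orthovP => u /UV /xV.
Qed.

(* Since [U] is orthogonal to [B :&: U], only a complement of it in [B] cuts [U]. *)
Lemma dim_le_of_cap_orthov U B :
  (U <= orthov U)%VS -> (U :&: orthov B <= B)%VS -> (\dim U <= \dim B)%N.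
Proof.
move=> isoU UBB.
have UEBU : (U :&: orthov (B :\: U) <= B :&: U)%VS.
  apply/subvP => x /memv_capP [xU xE]; rewrite memv_cap xU andbT.
  apply: (subvP UBB); rewrite memv_cap xU; apply/mem_orthovP => b.
  rewrite -(addv_diff_cap B U) => /memv_addP [e eE [d /memv_capP [_ dU] ->]].
  by rewrite linearD /= (mem_orthovP xE) // (mem_orthovP (subvP isoU x xU)) // addr0.
have := dim_cap_orthov U (B :\: U); have := dimvS UEBU; have := dimv_cap_compl B U.
lia.
Qed.

(* A vector of the first section outside the second would translate the whole
   first section into [B], which is too small to contain it. *)
Lemma cap_orthov1_eq V B r v :
  (B <= V)%VS -> (\dim B < \dim V)%N -> r \notin orthov B -> v \notin orthov V ->
  {in (V :&: orthov <[r]>)%VS, forall y, y \notin orthov <[v]> -> y \in B} ->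
  (V :&: orthov <[r]>)%VS = (V :&: orthov <[v]>)%VS.
Proof.
move=> BV ltBV rB vV KB_out.
set K := (V :&: orthov <[r]>)%VS; set H := (V :&: orthov <[v]>)%VS.
have rV : r \notin orthov V by apply: contra rB; apply: (subvP (orthovS BV)).
have dimK : \dim K = (\dim V).-1 by rewrite -eq_dim_orthov1.
have dimH : \dim H = (\dim V).-1 by rewrite -eq_dim_orthov1.
suff KH : (K <= H)%VS by apply/eqP; rewrite -(dimv_leqif_eq KH) dimK dimH.
apply/subvP => y yK; rewrite memv_cap (memv_capP yK).1 /=.
apply: contraT => yv; have yB := KB_out y yK yv.
have KB : (K <= B)%VS.
  apply/subvP => z zK; have [zv | ] := boolP (z \in orthov <[v]>); last exact: KB_out.
  have yzK : y + z \in K by exact: memvD.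
  have yzv : y + z \notin orthov <[v]>.
    by apply: contra yv => yzv; rewrite -(addrK z y) memvB.
  by rewrite -(addKr y z) memvD ?memvN ?KB_out.
have KeqB : K = B.
  by apply/eqP; rewrite -(dimv_leqif_eq KB); have := dimvS KB; lia.
by move: rB; rewrite mem_orthov_sym -KeqB capvSr.
Qed.
End HermitianOrthogonality.

Lemma F2_eq1 (c : 'F_2) : c != 0 -> c = 1.
Proof. by case: c => [[|[|//]]] ? //= _; apply: val_inj. Qed.

Lemma F2_neq0E (c : 'F_2) : (c != 0) = (c == 1).
Proof. by apply/idP/eqP => [/F2_eq1 | ->]. Qed.

Lemma F2_addrr (c : 'F_2) : c + c = 0.
Proof. exact/addrr_pchar2/pchar_Fp. Qed.

Section PolarForm.
Variables (n : nat) (A : 'M['F_2]_(n.+1)).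

Lemma polar_mx x y : polar A x y = \tr (x *m (A + A^T) *m y^T).
Proof.
have yAx : y *m A *m x^T = x *m A^T *m y^T.
  by rewrite [LHS]mx11_scalar -tr_scalar_mx -mx11_scalar !trmx_mul trmxK mulmxA.
rewrite /polar /qf -!trace_mx11 !linearD /= !mulmxDl ?mulmxDr yAx.
by rewrite !linearD /=; ring.
Qed.

Lemma polarC x y : polar A x y = polar A y x.
Proof.
rewrite !polar_mx -[in RHS]mxtrace_tr !trmx_mul (trmxK x) mulmxA.
by rewrite [(A + A^T)^T]linearD /= trmxK addrC.
Qed.

Lemma polar_is_bilinear : bilinear_for *%R (idfun \; *%R) (polar A).
Proof.
split=> [y a u v | x a u v] /=; rewrite !polar_mx.
  by rewrite !mulmxDl -!scalemxAl linearP.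
by rewrite linearP /= mulmxDr -scalemxAr linearP.
Qed.

HB.instance Definition _ :=
  bilinear_isBilinear.Build _ _ _ _ _ _ (polar A) polar_is_bilinear.

Lemma polar_is_symmetric x y : polar A x y = (-1) ^+ false * idfun (polar A y x).
Proof. by rewrite mul1r polarC. Qed.

HB.instance Definition _ :=
  isHermitianSesquilinear.Build _ _ _ _ (polar A) polar_is_symmetric.

End PolarForm.

Section Quadric.
Variables (n : nat) (A : 'M['F_2]_(n.+1)).
Local Notation qf := (qf A).
Local Notation polar := (polar A).
Local Notation orthov := (orthov (Defs.polar A)).

Lemma qf0 : qf 0 = 0.
Proof. by rewrite /qf !mul0mx mxE. Qed.

Lemma qfD x y : qf (x + y) = qf x + qf y + polar x y.
Proof. by rewrite /polar; ring. Qed.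

Lemma qfZ c x : qf (c *: x) = c * qf x.
Proof.
by have [->|/F2_eq1 ->] := eqVneq c 0; rewrite ?scale0r ?scale1r ?mul0r ?mul1r ?qf0.
Qed.

Lemma polarxx x : polar x x = 0.
Proof.
rewrite /polar (_ : x + x = 0); last by apply/rowP => i; rewrite !mxE F2_addrr.
by rewrite qf0 sub0r -opprD F2_addrr oppr0.
Qed.

Lemma mem_orthov_polarP (V : {vspace vec n}) x :
  reflect {in V, forall y, polar x y = 0} (x \in orthov V).
Proof. exact: mem_orthovP. Qed.
Arguments mem_orthov_polarP {V x}.

Lemma mem_orthov1_polar x v : (x \in orthov <[v]>) = (polar x v == 0).
Proof. exact: mem_orthov1. Qed.

Lemma in_quadricP (U : {vspace vec n}) :
  reflect {in U, forall x, qf x = 0} (in_quadric A U).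
Proof.
apply: (iffP forallP) => [qU x xU | qU x]; first exact/eqP/(implyP (qU x)).
by apply/implyP => /qU ->.
Qed.
Arguments in_quadricP {U}.

Lemma in_quadric_polar (U : {vspace vec n}) :
  in_quadric A U -> {in U &, forall x y, polar x y = 0}.
Proof.
move/in_quadricP => qU x y xU yU.
by have := qfD x y; rewrite !qU ?memvD // !add0r.
Qed.

Lemma in_quadric_orthov (U : {vspace vec n}) : in_quadric A U -> (U <= orthov U)%VS.
Proof.
by move=> qU; apply/subvP => x xU; apply/mem_orthov_polarP => y; apply: in_quadric_polar.
Qed.

Lemma in_quadric_addv (U V : {vspace vec n}) :
  in_quadric A U -> in_quadric A V -> (V <= orthov U)%VS -> in_quadric A (U + V).
Proof.
move=> /in_quadricP qU /in_quadricP qV /subvP VU.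
apply/in_quadricP => _ /memv_addP [u uU [v vV ->]].
by rewrite qfD qU // qV // polarC (mem_orthov_polarP (VU v vV)) // !addr0.
Qed.

Lemma in_quadric_line v : qf v = 0 -> in_quadric A <[v]>.
Proof. by move=> qv; apply/in_quadricP => _ /vlineP [k ->]; rewrite qfZ qv mulr0. Qed.

Lemma in_quadric_span (X : seq (vec n)) :
  {in X, forall x, qf x = 0} -> {in X &, forall x y, polar x y = 0} ->
  in_quadric A <<X>>.
Proof.
elim: X => [|x X IH] qX pX.
  by apply/in_quadricP => y; rewrite span_nil memv0 => /eqP ->; rewrite qf0.
have Xx y : y \in X -> y \in x :: X by rewrite inE orbC => ->.
rewrite span_cons; apply: in_quadric_addv.
- by apply/in_quadric_line/qX; rewrite mem_head.
- by apply: IH => [y /Xx /qX | y z /Xx yX /Xx zX]; last exact: pX.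
by apply/span_subvP => y /Xx yX; rewrite mem_orthov1_polar pX ?mem_head.
Qed.

Lemma card_vspaceF2 (U : {vspace vec n}) : #|U| = (2 ^ \dim U)%N.
Proof. by rewrite card_vspace card_Fp. Qed.

Lemma card_ppoints (U : {vspace vec n}) : #|ppoints U| = (2 ^ \dim U - 1)%N.
Proof.
rewrite -card_vspaceF2 (cardD1 0 U) mem0v add1n subn1 /=.
by apply: eq_card => x; rewrite !inE.
Qed.

Lemma card_notin_orthov1 (V : {vspace vec n}) u :
  u \notin orthov V -> #|[set x in V | x \notin orthov <[u]>]| = (2 ^ (\dim V).-1)%N.
Proof.
move=> uV.
have dimVu : (\dim V).-1 = \dim (V :&: orthov <[u]>) by exact: eq_dim_orthov1.
have V_gt0 : (0 < \dim V)%N.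
  by rewrite lt0n dimv_eq0; apply: contraNneq uV => ->; rewrite orthov0 memvf.
have : (#|(V :&: orthov <[u]>)%VS| + #|[set x in V | x \notin orthov <[u]>]| = #|V|)%N.
  rewrite -(cardID (mem (orthov <[u]>)) (mem V)); congr (_ + _)%N.
    by apply: eq_card => x; rewrite memv_cap !inE.
  by apply: eq_card => x; rewrite !inE andbC.
have dbl : (2 ^ \dim V = 2 * 2 ^ (\dim V).-1)%N by rewrite -expnS prednK.
by rewrite !card_vspaceF2 -dimVu dbl; lia.
Qed.

Lemma card_notin_orthov1_diff (V B : {vspace vec n}) u :
  (B <= V)%VS -> u \notin orthov B ->
  #|[set x in V | (x \notin orthov <[u]>) && (x \notin B)]| =
    (2 ^ (\dim V).-1 - 2 ^ (\dim B).-1)%N.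
Proof.
move=> BV uB; have uV : u \notin orthov V by apply: contra uB; apply/subvP/orthovS.
rewrite -(card_notin_orthov1 uV) -(card_notin_orthov1 uB).
rewrite -(cardID [pred x | x \in B] [set x in V | x \notin orthov <[u]>]).
have -> : #|[set x in B | x \notin orthov <[u]>]| =
          #|[predI [set x in V | x \notin orthov <[u]>] & [pred x | x \in B]]|.
  apply: eq_card => x; rewrite !inE andbC.
  by case/boolP: (x \in B) => [xB | _]; rewrite ?(subvP BV x xB) ?andbT ?andbF.
rewrite addKn; apply: eq_card => x; rewrite !inE.
by case: (x \in V); case: (x \in B); rewrite /= ?andbT ?andbF.
Qed.

Lemma card_polar_half (T : {set vec n}) a v :
  polar a v != 0 -> {in T, forall x, x + a \in T} ->
  (#|[set x in T | polar x v == 0%R]| * 2)%N = #|T|.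
Proof.
move=> /F2_eq1 av Ta.
have shift_le c :
    (#|[set x in T | polar x v == c]| <= #|[set x in T | polar x v == (c + 1)%R]|)%N.
  rewrite -(card_imset _ (addIr a)); apply/subset_leq_card/subsetP => y.
  case/imsetP=> x; rewrite !inE => /andP [xT /eqP xc] ->.
  by rewrite Ta //= linearDl /= av xc.
have := shift_le 1; have := shift_le 0; rewrite add0r F2_addrr.
rewrite -(cardsID [set x | polar x v == 0] T) muln2 -addnn.
have -> : T :&: [set x | polar x v == 0] = [set x in T | polar x v == 0].
  by apply/setP => x; rewrite !inE.
have -> : T :\: [set x | polar x v == 0] = [set x in T | polar x v == 1].
  apply/setP => x; rewrite !inE andbC.
  by case/boolP: (polar x v == 0) => [/eqP -> // | /F2_eq1 ->].
by move=> le01 le10; congr (_ + _)%N; apply/eqP; rewrite eqn_leq le01 le10.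
Qed.

Section Generators.
Variables (g : nat) (indexA : proj_index A g).

Lemma ppoints_generator (U : {vspace vec n}) (C : {set vec n}) :
  in_quadric A U -> C \subset ppoints U -> #|C| = (2 ^ g.+1 - 1)%N ->
  C = ppoints U /\ \dim U = g.+1.
Proof.
move=> qU CU cardC; have dimU := indexA.2 U qU.
have := subset_leq_card CU; rewrite card_ppoints cardC => leC.
have leU : (2 ^ \dim U <= 2 ^ g.+1)%N by rewrite leq_exp2l.
have geU : (2 ^ g.+1 <= 2 ^ \dim U)%N.
  by have := expn_gt0 2 g.+1; have := expn_gt0 2 (\dim U); lia.
split; last by apply/eqP; rewrite eqn_leq dimU -(leq_exp2l _ _ (ltnSn 1)).
by apply/eqP; rewrite eqEcard CU card_ppoints cardC; lia.
Qed.

Lemma generator_maximal (U : {vspace vec n}) x :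
  in_quadric A U -> \dim U = g.+1 -> qf x = 0 -> x \in orthov U -> x \in U.
Proof.
move=> qU dimU qx xU.
have qUx : in_quadric A (U + <[x]>).
  by apply: in_quadric_addv; rewrite ?in_quadric_line // -memvE.
have : (\dim (U + <[x]>) <= \dim U)%N by rewrite dimU; exact: indexA.2.
by rewrite (geq_leqif (dimv_leqif_sup (addvSl U _))) subv_add subvv -memvE.
Qed.

End Generators.
End Quadric.

Arguments mem_orthov_polarP {n A V x}.
Arguments in_quadricP {n A U}.

Section SwitchedGraph.
Variables (n : nat) (A : 'M['F_2]_(n.+1)) (al : {vspace vec n}).
Hypothesis qal : in_quadric A al.
Local Notation qf := (qf A).
Local Notation polar := (polar A).
Local Notation orthov := (orthov (Defs.polar A)).
Local Notation typeII := (typeII A al).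

Lemma qpointsP x : reflect (x != 0 /\ qf x = 0) (x \in qpoints A).
Proof. by rewrite inE; apply: (iffP andP) => [[-> /eqP] | [-> ->]]. Qed.

Lemma adjGE P R : P \in qpoints A -> R \in qpoints A ->
  adjG A P R = (P != R) && (polar P R == 0).
Proof.
move=> qpP qpR; rewrite /adjG qpP qpR /=; congr (_ && _).
have [[_ qP] [_ qR]] := (qpointsP _ qpP, qpointsP _ qpR).
apply/idP/eqP => [qPR | PR].
  apply: (in_quadric_polar qPR).
    exact/(subvP (addvSl _ _))/memv_line.
  exact/(subvP (addvSr _ _))/memv_line.
by apply: in_quadric_addv; rewrite ?in_quadric_line // -memvE mem_orthov1_polar polarC PR.
Qed.

Lemma typeIIE x : (x \in typeII) = [&& x \in qpoints A, x \notin al & x \in orthov al].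
Proof.
rewrite inE; case/boolP: (x \in qpoints A) => //= /qpointsP [_ qx].
congr (_ && _); apply/idP/idP => [qalx | xal].
  apply/mem_orthov_polarP => a aal; apply: (in_quadric_polar qalx).
    exact/(subvP (addvSr _ _))/memv_line.
  exact: (subvP (addvSl _ _)).
by apply: in_quadric_addv; rewrite ?in_quadric_line // -memvE.
Qed.

Lemma typeII_orthov x : x \in typeII -> x \in orthov al.
Proof. by rewrite typeIIE => /and3P []. Qed.

Lemma typeII_qpoints x : x \in typeII -> x \in qpoints A.
Proof. by rewrite typeIIE => /and3P []. Qed.

(* The pairs whose adjacency in Gamma_s is opposite to that in Gamma. *)
Definition switched P R :=
  (P \in typeII) && (R \notin orthov al) || (R \in typeII) && (P \notin orthov al).

Lemma typeII_addr x a : x \in typeII -> a \in al -> x + a \in typeII.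
Proof.
rewrite !typeIIE => /and3P [/qpointsP [_ qx] xal xo] aal.
have xaal : x + a \notin al by apply: contra xal => xa; rewrite -(addrK a x) memvB.
have ao : a \in orthov al := subvP (in_quadric_orthov qal) a aal.
rewrite xaal (memvD xo ao) /= andbT.
apply/qpointsP; split; first by apply: contraNneq xaal => ->; rewrite mem0v.
move/in_quadricP: qal => /(_ a aal) qa.
by rewrite qfD qx qa (mem_orthov_polarP xo) ?addr0.
Qed.

Lemma special_notin_orthov R : R \in qpoints A -> R \notin orthov al -> special A al R.
Proof.
move=> qR Ral; have [a aal aR] : exists2 a, a \in al & polar a R != 0.
  by case/mem_orthovPn: Ral => a aal Ra; exists a; rewrite // polarC.
have RnX : R \notin typeII by rewrite typeIIE (negbTE Ral) !andbF.
rewrite /special inE RnX qR /=.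
have -> : [set X in typeII | adjG A R X] = [set X in typeII | polar X R == 0].
  apply: eq_finset => X; apply: andb_id2l => XX.
  rewrite (adjGE qR (typeII_qpoints XX)) polarC; apply: andb_idl => _.
  by apply: contraNneq RnX => ->.
by apply/eqP/(card_polar_half aR) => x /typeII_addr; apply.
Qed.

Lemma special_typeII_notin_orthov R X :
  special A al R -> X \in typeII -> R \notin orthov al.
Proof.
move=> /andP []; rewrite inE => /andP [RnX qR] /eqP half XX; apply/negP => Ro.
have Ral : R \in al by move: RnX; rewrite typeIIE qR Ro andbT negbK.
have adjR : [set Y in typeII | adjG A R Y] = typeII.
  apply/setP => Y; rewrite inE; case/boolP: (Y \in typeII) => //= YX.
  have RY : R != Y by apply: contraTneq Ral => ->; move: YX; rewrite typeIIE => /and3P [].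
  rewrite (adjGE qR (typeII_qpoints YX)) RY polarC.
  by rewrite (mem_orthov_polarP (typeII_orthov YX)).
have : (0 < #|typeII|)%N by apply/card_gt0P; exists X.
by move: half; rewrite adjR; lia.
Qed.

Lemma adjGsE P R : P \in qpoints A -> R \in qpoints A -> P != R ->
  adjGs A al P R = (polar P R == (switched P R)%:R).
Proof.
move=> qP qR PR; rewrite /adjGs /switched.
case: ifP => [/andP [sR PX] | nsRP].
  by rewrite PX (special_typeII_notin_orthov sR PX) qP qR PR adjGE // PR F2_neq0E.
case: ifP => [/andP [sP RX] | nsPR].
  by rewrite RX (special_typeII_notin_orthov sP RX) orbT qP qR PR adjGE // PR F2_neq0E.
have -> : (P \in typeII) && (R \notin orthov al) || (R \in typeII) && (P \notin orthov al)
    = false.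
  apply/norP; split; apply/negP => /andP [].
    by move=> PX Ro; rewrite (special_notin_orthov qR Ro) PX in nsRP.
  by move=> RX Po; rewrite (special_notin_orthov qP Po) RX in nsPR.
by rewrite adjGE // PR.
Qed.

End SwitchedGraph.

Arguments qpointsP {n A x}.

Lemma tight_card_bounds (a S P G x1 x2 x3 : nat) :
  (0 < a)%N -> (a <= S)%N -> (S <= G)%N -> (P <= G)%N ->
  (x1 <= a - 1)%N -> (x2 <= S - a)%N -> (x3 <= P)%N -> (x1 + x2 + x3 = 2 * G - 1)%N ->
  [/\ S = G, P = G, x1 = (a - 1)%N, x2 = (G - a)%N & x3 = G].
Proof. by move=> *; split; lia. Qed.

Section Cliques.
Variables (n : nat) (A : 'M['F_2]_(n.+1)) (g s : nat).
Variables (al : {vspace vec n}) (C : {set vec n}).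
Hypotheses (indexA : proj_index A g) (s_lt_g : (s < g)%N).
Hypotheses (qal : in_quadric A al) (dim_al : \dim al = s.+1).
Hypotheses (cliqueC : clique_s A al C) (cardC : #|C| = (2 ^ g.+1 - 1)%N).
Local Notation qf := (qf A).
Local Notation polar := (polar A).
Local Notation orthov := (orthov (Defs.polar A)).
Local Notation typeII := (typeII A al).
Local Notation switched := (switched A al).

Lemma clique_qpoints x : x \in C -> x \in qpoints A.
Proof. exact: (subsetP cliqueC.1). Qed.

Lemma clique_polar P R : P \in C -> R \in C -> polar P R = (switched P R)%:R.
Proof.
move=> PC RC; have [<- | PR] := eqVneq P R.
  rewrite polarxx /switched orbb.
  by case: (boolP (P \in typeII)) => [/(typeII_orthov qal) -> | _].
have := cliqueC.2 P R PC RC PR.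
by rewrite adjGsE ?clique_qpoints // => /eqP.
Qed.

Lemma in_quadric_span_clique (D : {set vec n}) :
  D \subset C -> {in D &, forall x y, ~~ switched x y} -> in_quadric A <<enum D>>.
Proof.
move=> /subsetP DC nsw; apply: in_quadric_span => [x | x y]; rewrite !mem_enum => xD.
  by case/qpointsP: (clique_qpoints (DC x xD)).
by move=> yD; rewrite clique_polar ?DC // (negbTE (nsw x y xD yD)).
Qed.

Lemma clique_classA : {in C, forall x, x \in orthov al} -> classA A g al C.
Proof.
move=> Co; set S := (al + <<enum C>>)%VS.
have qS : in_quadric A S.
  apply: in_quadric_addv => //.
    by apply: in_quadric_span_clique => // x y /Co xo /Co yo; rewrite /switched xo yo !andbF.
  by apply/span_subvP => y; rewrite mem_enum => /Co.
have CS : C \subset ppoints S.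
  apply/subsetP => x xC; rewrite inE (qpointsP (clique_qpoints xC)).1 /=.
  by apply: (subvP (addvSr _ _)); rewrite memv_span ?mem_enum.
have [-> dimS] := ppoints_generator indexA qS CS cardC.
by exists S; split; [split | exact: addvSl |].
Qed.

Lemma clique_meets_typeII : exists2 X0, X0 \in C & X0 \in typeII.
Proof.
case: (boolP [exists x in C, x \in typeII]) => [/exists_inP [x xC xX] | ]; first by exists x.
rewrite negb_exists_in => /forall_inP CnX; exfalso.
set P := <<enum C>>%VS.
have qP : in_quadric A P.
  apply: in_quadric_span_clique => // x y xC yC.
  by rewrite /switched (negbTE (CnX x xC)) (negbTE (CnX y yC)).
have CP : C \subset ppoints P.
  apply/subsetP => x xC; rewrite inE (qpointsP (clique_qpoints xC)).1 /=.
  by rewrite memv_span ?mem_enum.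
have [eC dimP] := ppoints_generator indexA qP CP cardC.
have : (\dim P <= \dim al)%N.
  apply: (dim_le_of_cap_orthov (in_quadric_orthov qP)).
  apply/subvP => x /memv_capP [xP xo]; have [-> | x0] := eqVneq x 0; first exact: mem0v.
  have xC : x \in C by rewrite eC inE x0.
  by apply: contraNT (CnX x xC) => xal; rewrite (typeIIE qal) clique_qpoints // xal.
by rewrite dimP dim_al ltnS leqNgt s_lt_g.
Qed.

Section ClassB.
Variables (R0 X0 : vec n).
Hypotheses (R0C : R0 \in C) (R0o : R0 \notin orthov al).
Hypotheses (X0C : X0 \in C) (X0X : X0 \in typeII).

Let C1 := C :&: [set x in al].
Let C2 := C :&: typeII.
Let C3 := [set x in C | x \notin orthov al].
Let Sg := (al + <<enum C2>>)%VS.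
Let Pi := <<enum (C1 :|: C3)>>%VS.

Let alo : (al <= orthov al)%VS. Proof. exact: in_quadric_orthov. Qed.

Let C2_orthov x : x \in C2 -> x \in orthov al.
Proof. by case/setIP => _ /(typeII_orthov qal). Qed.

Let C13_notX x : x \in C1 :|: C3 -> x \notin typeII.
Proof.
case/setUP => [/setIP [_] | ]; rewrite inE; [move=> xal | case/andP=> _ xo].
  by rewrite (typeIIE qal) xal andbF.
by apply: contra xo; apply: typeII_orthov.
Qed.

Let polar_C2_C3 x y : x \in C2 -> y \in C3 -> polar x y = 1.
Proof.
move=> /setIP [xC xX] /[dup] yC3; rewrite inE => /andP [yC yo].
by rewrite clique_polar // /switched xX yo.
Qed.

Let C2_Sg x : x \in C2 -> x \in Sg.
Proof. by move=> xC2; apply: (subvP (addvSr _ _)); rewrite memv_span ?mem_enum. Qed.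

Let C13_Pi x : x \in C1 :|: C3 -> x \in Pi.
Proof. by move=> xC13; rewrite memv_span ?mem_enum. Qed.

Let R0C3 : R0 \in C3. Proof. by rewrite inE R0C. Qed.
Let X0C2 : X0 \in C2. Proof. by rewrite inE X0C. Qed.

Lemma in_quadric_Sg : in_quadric A Sg.
Proof.
apply: in_quadric_addv => //; last by apply/span_subvP => y; rewrite mem_enum => /C2_orthov.
apply: in_quadric_span_clique; first exact: subsetIl.
by move=> x y /C2_orthov xo /C2_orthov yo; rewrite /switched xo yo !andbF.
Qed.

Lemma in_quadric_Pi : in_quadric A Pi.
Proof.
apply: in_quadric_span_clique.
  by rewrite subUset subsetIl; apply/subsetP => x; rewrite inE => /andP [].
by move=> x y /C13_notX xX /C13_notX yX; rewrite /switched (negbTE xX) (negbTE yX).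
Qed.

Let R0C13 : R0 \in C1 :|: C3. Proof. by rewrite in_setU R0C3 orbT. Qed.

Let polar_C13 x y : x \in C1 :|: C3 -> y \in C1 :|: C3 -> polar x y = 0.
Proof. by move=> /C13_Pi xPi /C13_Pi yPi; apply: (in_quadric_polar in_quadric_Pi). Qed.

Let alSg : (al <= Sg)%VS. Proof. exact: addvSl. Qed.

Let R0_Sg : R0 \notin orthov Sg.
Proof.
apply/negP => /mem_orthov_polarP /(_ X0 (C2_Sg X0C2)).
by rewrite polarC polar_C2_C3.
Qed.

Let X0_Pi : X0 \notin orthov Pi.
Proof. by apply/negP => /mem_orthov_polarP /(_ R0 (C13_Pi R0C13)); rewrite polar_C2_C3. Qed.

Lemma C_split : C = C1 :|: C2 :|: C3.
Proof.
apply/setP => x; rewrite !in_setU !in_setI (typeIIE qal) !inE.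
case/boolP: (x \in C) => //= xC; have [x0 qx] := qpointsP (clique_qpoints xC).
by rewrite x0 qx eqxx /=; case: (x \in al); case: (x \in orthov al).
Qed.

Lemma card_C_split : #|C| = (#|C1| + #|C2| + #|C3|)%N.
Proof.
rewrite {1}C_split !cardsU.
have -> : C1 :&: C2 = set0.
  apply/setP => x; rewrite !in_setI (typeIIE qal) !inE.
  by case: (x \in al); rewrite !andbF.
have -> : (C1 :|: C2) :&: C3 = set0.
  apply/setP => x; rewrite in_setI in_set0; apply/negP => /andP [/setUP x12].
  rewrite inE => /andP [_ /negP]; apply; case: x12 => [/setIP [_] | /C2_orthov //].
  by rewrite inE => /(subvP alo).
by rewrite cards0 !subn0.
Qed.

Lemma C1_sub : C1 \subset ppoints (al :&: orthov <[R0]>).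
Proof.
apply/subsetP => x xC1; have /setIP [xC] := xC1; rewrite inE => xal.
have xC13 : x \in C1 :|: C3 by rewrite in_setU xC1.
rewrite inE memv_cap xal mem_orthov1_polar (polar_C13 xC13 R0C13) eqxx !andbT.
by case/qpointsP: (clique_qpoints xC).
Qed.

Lemma C2_sub : C2 \subset [set x in Sg | (x \notin orthov <[R0]>) && (x \notin al)].
Proof.
apply/subsetP => x xC2; rewrite inE C2_Sg // mem_orthov1_polar polar_C2_C3 //=.
by case/setIP: xC2 => _; rewrite (typeIIE qal) => /and3P [].
Qed.

Lemma C3_sub : C3 \subset [set x in Pi | x \notin orthov <[X0]>].
Proof.
apply/subsetP => x xC3; rewrite inE C13_Pi ?in_setU ?xC3 ?orbT //=.
by rewrite mem_orthov1_polar polarC polar_C2_C3.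
Qed.

Lemma classB_counting :
  [/\ \dim Sg = g.+1, \dim Pi = g.+1, #|C1| = (2 ^ s - 1)%N,
      #|C2| = (2 ^ g - 2 ^ s)%N & #|C3| = (2 ^ g)%N].
Proof.
have dimSg := indexA.2 _ in_quadric_Sg; have dimPi := indexA.2 _ in_quadric_Pi.
have al_Sg : (s.+1 <= \dim Sg)%N by rewrite -dim_al; exact: dimvS.
have Pi_gt0 : (0 < \dim Pi)%N.
  by rewrite lt0n dimv_eq0; apply: contraNneq X0_Pi => ->; rewrite orthov0 memvf.
have le_s : (2 ^ s <= 2 ^ (\dim Sg).-1)%N.
  by rewrite leq_exp2l // -ltnS prednK // (leq_trans _ al_Sg).
have le_Sg : (2 ^ (\dim Sg).-1 <= 2 ^ g)%N.
  by rewrite leq_exp2l // -subn1 leq_subLR add1n.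
have le_Pi : (2 ^ (\dim Pi).-1 <= 2 ^ g)%N.
  by rewrite leq_exp2l // -subn1 leq_subLR add1n.
have c1 := subset_leq_card C1_sub.
rewrite card_ppoints -eq_dim_orthov1 // dim_al /= in c1.
have c2 := subset_leq_card C2_sub; rewrite card_notin_orthov1_diff // dim_al /= in c2.
have c3 := subset_leq_card C3_sub; rewrite card_notin_orthov1 // in c3.
have sumC : (#|C1| + #|C2| + #|C3| = 2 * 2 ^ g - 1)%N by rewrite -card_C_split cardC expnS.
have [eSg ePi -> -> ->] := tight_card_bounds (expn_gt0 2 s) le_s le_Sg le_Pi c1 c2 c3 sumC.
split=> //.
  by rewrite -(expnI (ltnSn 1) eSg) prednK // (leq_trans _ al_Sg).
by rewrite -(expnI (ltnSn 1) ePi) prednK.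
Qed.

Lemma classB_parts :
  [/\ C1 = ppoints (al :&: orthov <[R0]>),
      C2 = [set x in Sg | (x \notin orthov <[R0]>) && (x \notin al)]
    & C3 = [set x in Pi | x \notin orthov <[X0]>]].
Proof.
have [dSg dPi c1 c2 c3] := classB_counting.
split; apply/eqP; rewrite eqEcard ?C1_sub ?C2_sub ?C3_sub //=.
- by rewrite card_ppoints -eq_dim_orthov1 // dim_al c1.
- by rewrite card_notin_orthov1_diff // dSg dim_al c2.
- by rewrite card_notin_orthov1 // dPi c3.
Qed.

Lemma Sg_cap_orthov_sub_Pi : (Sg :&: orthov <[R0]> <= Pi)%VS.
Proof.
have [dSg dPi _ _ _] := classB_counting; have [_ eC2 _] := classB_parts.
apply/subvP => x /memv_capP [xSg xR0].
apply: (generator_maximal indexA in_quadric_Pi dPi); first exact: (in_quadricP in_quadric_Sg).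
rewrite mem_orthov_sym; apply/span_subvP => y; rewrite mem_enum mem_orthov1_polar => yC13.
case/setUP: (yC13) => [/setIP [_] | yC3].
  by rewrite inE => yal; rewrite (in_quadric_polar in_quadric_Sg) // (subvP alSg).
have yo : y \notin orthov al by move: yC3; rewrite inE => /andP [].
have Sg_y : (Sg :&: orthov <[y]>)%VS = (Sg :&: orthov <[R0]>)%VS.
  apply: (cap_orthov1_eq alSg _ yo R0_Sg); first by rewrite dim_al dSg ltnS.
  move=> z /memv_capP [zSg zy] zR0; apply: contraT => zal.
  have zC2 : z \in C2 by rewrite eC2 inE zSg zR0.
  by move: zy; rewrite mem_orthov1_polar polar_C2_C3.
have : x \in (Sg :&: orthov <[y]>)%VS by rewrite Sg_y memv_cap xSg.
by rewrite memv_cap mem_orthov1_polar polarC => /andP [].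
Qed.

Lemma Sg_cap_Pi : (Sg :&: Pi)%VS = (Sg :&: orthov <[R0]>)%VS.
Proof.
apply/eqP; rewrite eqEsubv; apply/andP; split.
  apply: capvS => //; apply/subvP => x xPi.
  by rewrite mem_orthov1_polar (in_quadric_polar in_quadric_Pi xPi (C13_Pi R0C13)).
by rewrite subv_cap capvSl Sg_cap_orthov_sub_Pi.
Qed.

Lemma dim_Sg_cap_Pi : \dim (Sg :&: Pi) = g.
Proof. by have [dSg _ _ _ _] := classB_counting; rewrite Sg_cap_Pi -eq_dim_orthov1 // dSg. Qed.

Lemma Pi_cap_orthov_X0 : (Pi :&: orthov <[X0]>)%VS = (Sg :&: Pi)%VS.
Proof.
have [_ dPi _ _ _] := classB_counting.
have sub : (Sg :&: Pi <= Pi :&: orthov <[X0]>)%VS.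
  rewrite capvC; apply: capvS => //; apply/subvP => x xSg.
  by rewrite mem_orthov1_polar (in_quadric_polar in_quadric_Sg xSg (C2_Sg X0C2)).
by apply/esym/eqP; rewrite -(dimv_leqif_eq sub) dim_Sg_cap_Pi -eq_dim_orthov1 // dPi.
Qed.

Lemma al_notsub_Pi : ~~ (al <= Pi)%VS.
Proof.
apply: contra R0o => /subvP alPi; apply/mem_orthov_polarP => a aal.
exact: (in_quadric_polar in_quadric_Pi (C13_Pi R0C13) (alPi a aal)).
Qed.

Lemma C_classB_decomposition :
  C = ppoints (al :&: Pi) :|: (ppoints Sg :\: (ppoints al :|: ppoints Pi))
      :|: (ppoints Pi :\: ppoints Sg).
Proof.
have [e1 e2 e3] := classB_parts.
have inPi x : x \in Sg -> (x \in Pi) = (x \in orthov <[R0]>).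
  by move=> xS; have /vspaceP/(_ x) := Sg_cap_Pi; rewrite !memv_cap xS.
have inSg x : x \in Pi -> (x \in Sg) = (x \in orthov <[X0]>).
  by move=> xP; have /vspaceP/(_ x) := Pi_cap_orthov_X0; rewrite !memv_cap xP andbT.
rewrite {1}C_split e1 e2 e3; apply/setP => x; rewrite !inE !memv_cap.
have [-> | _] := eqVneq x 0; rewrite ?mem0v //=.
case/boolP: (x \in Sg) => xS; last first.
  have xal : x \in al = false by apply/negbTE; apply: contra xS; apply: (subvP alSg).
  case/boolP: (x \in Pi) => xP; rewrite xal ?andbF //=.
  by rewrite -(inSg x xP) xS.
case/boolP: (x \in orthov <[R0]>) => xR0.
  have xP : x \in Pi by rewrite inPi.
  by rewrite xP -(inSg x xP) xS /=; case: (x \in al).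
by rewrite (inPi x xS) (negbTE xR0) /=; case: (x \in al).
Qed.

Lemma clique_classB : classB A g al C.
Proof.
have [dSg dPi _ _ _] := classB_counting.
exists Sg, Pi; split; first by split; split; rewrite ?in_quadric_Sg ?in_quadric_Pi.
- exact: alSg.
- exact: al_notsub_Pi.
- exact: dim_Sg_cap_Pi.
- exact: C_classB_decomposition.
Qed.

End ClassB.
End Cliques.

Theorem lemma5p4 (n : nat) (A : 'M['F_2]_(n.+1)) (g s : nat)
  (al : {vspace vec n}) (C : {set vec n}) :
  nonsingular A -> proj_index A g -> (1 <= g)%N -> (s < g)%N ->
  in_quadric A al -> \dim al = s.+1 ->
  clique_s A al C -> #|C| = (2 ^ g.+1 - 1)%N ->
  classA A g al C \/ classB A g al C.
Proof.
move=> _ indexA _ s_lt_g qal dim_al cliqueC cardC.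
have [/forall_inP Co | ] := boolP [forall x in C, x \in orthov (polar A) al].
  by left; apply: clique_classA Co.
rewrite negb_forall_in => /exists_inP [R0 R0C R0o].
have [X0 X0C X0X] := clique_meets_typeII indexA s_lt_g qal dim_al cliqueC cardC.
by right; apply: (clique_classB indexA s_lt_g qal dim_al cliqueC cardC R0C R0o X0C X0X).
Qed.
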